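(* Under the standing assumptions below, for all $c,d\in I$ and $k\in\{0,\dots,n\}$: if $c\prec d$ but $c\not\prec_k d$, then $\mathrm{var}(c)\cap\mathrm{var}(d)\cap X_k=\emptyset$.
   Context: Standing assumptions: $I$ is a finite set of weighted constraints with default values on a finite domain $D$ such that distinct constraints have distinct variable sets, $\mathcal H(I)=(\mathrm{var}(I),\{\mathrm{var}(c)\mid c\in I\})$ is $\beta$-acyclic, and $(x_1,\dots,x_n)$ is a $\beta$-elimination order of $\mathcal H(I)$ (an enumeration of $\mathrm{var}(I)$ such that for each $k$, $x_{k+1}$ is a nest point—the edges containing it are totally ordered by inclusion—of the hypergraph with vertices $\mathrm{var}(I)\setminus X_k$ and edges $\{e\setminus X_k\}\setminus\{\emptyset\}$). $X_k=\{x_1,\dots,x_k\}$. For $c,d\in I$: $c\prec d$ iff there is $k$ with $\mathrm{var}(c)\setminus X_k\subsetneq\mathrm{var}(d)\setminus X_k$; $c\preceq d$ iff $c\prec d$ or $c=d$. Relations $\prec_k$ are defined inductively: $\prec_0=\emptyset$; $c\prec_{k+1}d$ iff $c\prec_k d$ or there is $e\in I$ with $c\preceq_k e\prec d$ and $x_{k+1}\in\mathrm{var}(d)\cap\mathrm{var}(e)$; here $c\preceq_k d$ iff $c=d$ or $c\prec_k d$. *)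

From mathcomp Require Import all_boot.
Set Implicit Arguments. Unset Strict Implicit. Unset Printing Implicit Defensive.

(* A constraint set I is abstracted to a finite type of constraints [I] with
   scope map [var : I -> {set V}] over a finite type of variables [V].
   Only the hypergraph H(I) matters for the relations below. *)

Section Beta.
Variables (V I : finType) (var : I -> {set V}).

Definition varI : {set V} := \bigcup_(c : I) var c.

Definition Xk (xs : seq V) (k : nat) : {set V} := [set x in take k xs].

(* x is a nest point of the hypergraph with vertices var(I) \ X and edges
   {var e \ X | e in I} \ {emptyset}: x is a vertex and the edges containing x
   are totally ordered by inclusion. *)
Definition nest_point (X : {set V}) (x : V) : Prop :=
  x \in varI :\: X /\
  forall e f : I, x \in var e :\: X -> x \in var f :\: X ->
    (var e :\: X \subset var f :\: X) \/ (var f :\: X \subset var e :\: X).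

Definition beta_elim_order (xs : seq V) : Prop :=
  uniq xs /\ (forall x, (x \in xs) = (x \in varI)) /\
  forall k x, onth xs k = Some x -> nest_point (Xk xs k) x.

(* beta-acyclicity of H(I), via its standard characterisation as the existence
   of a beta-elimination order. *)
Definition beta_acyclic : Prop := exists xs, beta_elim_order xs.

Definition prec (xs : seq V) (c d : I) : Prop :=
  exists k, var c :\: Xk xs k \proper var d :\: Xk xs k.

Fixpoint preck (xs : seq V) (k : nat) (c d : I) : Prop :=
  match k with
  | 0 => False
  | k'.+1 => preck xs k' c d \/
      exists e : I, (c = e \/ preck xs k' c e) /\ prec xs e d /\
        exists x, onth xs k' = Some x /\ x \in var d /\ x \in var e
  end.

End Beta.

From mathcomp Require Import all_boot.

Set Implicit Arguments.
Unset Strict Implicit.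
Unset Printing Implicit Defensive.

(* A shared variable x = x_(j+1) of c and d in X_k lets e := c witness
   c <_(j+1) d, and the relations <_k only grow with k. *)

Section PrecK.
Variables (V I : finType) (var : I -> {set V}) (xs : seq V).

Lemma preck_le (j m : nat) (c d : I) :
  j <= m -> preck var xs j c d -> preck var xs m c d.
Proof.
move=> /subnKC <-; elim: (m - j) => [|n IH]; first by rewrite addn0.
by move=> cd; rewrite addnS; left; apply: IH.
Qed.

Lemma preck_shared_var (j : nat) (x : V) (c d : I) :
  prec var xs c d -> onth xs j = Some x -> x \in var c -> x \in var d ->
  preck var xs j.+1 c d.
Proof.
move=> cd xj xc xd; right; exists c.
by split; [left | split=> //; exists x].
Qed.

End PrecK.

Lemma mem_Xk_onth (V : finType) (xs : seq V) (k : nat) (x : V) :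
  x \in Xk xs k -> exists2 j, j < k & onth xs j = Some x.
Proof.
rewrite inE -index_mem size_take_min leq_min => /andP[jk jxs].
exists (index x (take k xs)) => //.
rewrite onthE (nth_map x) //; congr Some.
by rewrite -(nth_take x jk) nth_index // -index_mem size_take_min leq_min jk.
Qed.

Theorem lemma5 (V I : finType) (var : I -> {set V}) (xs : seq V)
  (Hinj : injective var) (Hacyc : beta_acyclic var)
  (Hord : beta_elim_order var xs)
  (c d : I) (k : nat) (Hk : k <= size xs) :
  prec var xs c d -> ~ preck var xs k c d ->
  var c :&: var d :&: Xk xs k = set0.
Proof.
move=> cd not_cdk; apply/setP=> x; rewrite !in_setI in_set0.
apply/negbTE/negP=> /andP[/andP[xc xd] /mem_Xk_onth[j jk xj]].
by apply: not_cdk; apply: preck_le jk (preck_shared_var cd xj xc xd).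
Qed.
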